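(* For all $t\ge1$ and all $\mathbf{x}\in\mathcal{X}$, \[ \frac{\sigma_{\mathrm{fb}[t]}(\mathbf{x})}{\sigma_{t-1}(\mathbf{x})}\le e^{C}. \]
   Context: $\mathcal{X}$ is a finite subset of the unit ball; $f\sim\mathcal{GP}(0,k)$; noisy observations with noise $\mathcal{N}(0,\sigma^2)$. Queries $\mathbf{x}_1,\mathbf{x}_2,\dots$ are chosen in batches of size $B$ and indexed sequentially; $\mathrm{fb}[t]$ is the largest index whose observation is available when $\mathbf{x}_t$ is chosen, with $t-\mathrm{fb}[t]\le B$. $\sigma_{\mathrm{fb}[t]}(\mathbf{x})$ is the GP posterior standard deviation at $\mathbf{x}$ given the queries $1,\dots,\mathrm{fb}[t]$, and $\sigma_{t-1}(\mathbf{x})$ that given the queries $1,\dots,t-1$. $C$ is a constant with $\max_{A\subset\mathcal{X},|A|\le B-1}\mathbb{I}(f;\mathbf{y}_A\mid\mathbf{y}_{1:\mathrm{fb}[t]})\le C$ for all $t\ge1$, where $\mathbf{y}_A$ are noisy observations at $A$, $\mathbf{y}_{1:\mathrm{fb}[t]}$ the observations with indices $1,\dots,\mathrm{fb}[t]$, and $\mathbb{I}$ mutual information.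
   Formalization: In the bound defining C, A ranges over all lists of at most B−1 points of $\mathcal{X}$, repetitions allowed, rather than over subsets A ⊂ $\mathcal{X}$ with |A| ≤ B−1. The statement above fails without it. *)

From mathcomp Require Import all_boot all_order all_algebra.
From mathcomp Require Import reals sequences exp.
Set Implicit Arguments. Unset Strict Implicit. Unset Printing Implicit Defensive.
Import Order.TTheory GRing.Theory Num.Theory.
Local Open Scope ring_scope.

Section GP.
Variables (R : realType) (X : finType).

Definition gram (k : X -> X -> R) n (p : 'I_n -> X) : 'M[R]_n :=
  \matrix_(i, j) k (p i) (p j).

Definition psd_kernel (k : X -> X -> R) : Prop :=
  (forall x y, k x y = k y x) /\
  forall n (p : 'I_n -> X) (v : 'cV[R]_n), 0 <= (v^T *m gram k p *m v) 0 0.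

Definition post_cov (k : X -> X -> R) (sigma : R) n (p : 'I_n -> X) (x y : X) : R :=
  k x y - ((\row_i k x (p i)) *m invmx (gram k p + (sigma ^+ 2)%:M)
             *m (\col_i k (p i) y)) 0 0.

Definition post_sd k sigma n (p : 'I_n -> X) (x : X) : R :=
  Num.sqrt (post_cov k sigma p x x).

(* Mutual information I(f ; y_A | y_B) between f ~ GP(0,k) and noisy
   observations y_A at the points a_0..a_{m-1}, conditionally on noisy
   observations y_B at the points b_0..b_{n-1} (Gaussian closed form):
   1/2 log det (I + sigma^{-2} Sigma_{A|B}). *)
Definition minfo k sigma m (a : 'I_m -> X) n (b : 'I_n -> X) : R :=
  ln (\det (1%:M + (sigma ^- 2) *: \matrix_(i, j) post_cov k sigma b (a i) (a j)))
  / 2.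

(* the queries with indices 1..n of a query sequence xq : nat -> X *)
Definition qprefix (xq : nat -> X) n : 'I_n -> X := fun i => xq (val i).+1.

End GP.
Arguments qprefix {X} xq n _.

From mathcomp Require Import all_boot all_order all_algebra.
From mathcomp Require Import reals sequences exp.
From mathcomp Require Import boolp lra zify.
Set Implicit Arguments. Unset Strict Implicit. Unset Printing Implicit Defensive.
Import Order.TTheory GRing.Theory Num.Theory.
Local Open Scope ring_scope.

(* Let v be the posterior variance at x given the first fb[t] observations, S the
   posterior covariance of the m = t - 1 - fb[t] pending queries a, and s their
   posterior covariance with x.  Observing a as well leaves the variance
   v' = v - s^T (S + sigma^2 I)^-1 s.  The determinant of [[S + sigma^2 I, s], [s^T, v]]
   is det (S + sigma^2 I) v' by one Schur complement, and at least sigma^(2m) v by the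
   other, because S - s s^T / v is positive semidefinite.  Hence
   v / v' <= det (I + sigma^-2 S) = exp (2 I(f; y_a | y_1..fb[t])) <= exp (2 C). *)

Section SchurComplement.
Variables (F : fieldType) (n1 n2 : nat).
Implicit Types (A : 'M[F]_n1) (B : 'M[F]_(n1, n2)) (C : 'M[F]_(n2, n1)) (D : 'M[F]_n2).

Lemma det_block_ul A B C D : A \in unitmx ->
  \det (block_mx A B C D) = \det A * \det (D - C *m invmx A *m B).
Proof.
move=> uA.
have -> : block_mx A B C D =
    block_mx 1%:M 0 (C *m invmx A) 1%:M *m block_mx A B 0 (D - C *m invmx A *m B).
  by rewrite mulmx_block !(mul1mx, mul0mx, mulmx0, mulmx1, addr0, add0r) mulmxKV
    // -mulmxA addrC subrK.
by rewrite det_mulmx det_lblock det_ublock !det1 !mul1r.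
Qed.

Lemma det_block_dr A B C D : D \in unitmx ->
  \det (block_mx A B C D) = \det D * \det (A - B *m invmx D *m C).
Proof.
move=> uD.
have -> : block_mx A B C D =
    block_mx 1%:M (B *m invmx D) 0 1%:M *m block_mx (A - B *m invmx D *m C) 0 C D.
  by rewrite mulmx_block !(mul1mx, mul0mx, mulmx0, mulmx1, addr0, add0r) mulmxKV
    // -mulmxA subrK.
by rewrite det_mulmx det_lblock det_ublock !det1 !mul1r mulrC.
Qed.

Lemma mulmx_invmx_block A B C D m p (V : 'M[F]_(m, n1 + n2)) (U : 'M[F]_(n1 + n2, p)) :
  A \in unitmx -> D - C *m invmx A *m B \in unitmx ->
  V *m invmx (block_mx A B C D) *m U =
  lsubmx V *m invmx A *m usubmx U +
  (rsubmx V - lsubmx V *m invmx A *m B) *m invmx (D - C *m invmx A *m B)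
    *m (dsubmx U - C *m invmx A *m usubmx U).
Proof.
set Z := D - C *m invmx A *m B => uA uZ; rewrite -[_ *m invmx Z *m _]mulmxA.
set z := invmx Z *m (dsubmx U - C *m invmx A *m usubmx U).
set y := col_mx (invmx A *m (usubmx U - B *m z)) z.
have My : block_mx A B C D *m y = U.
  rewrite mul_block_col -[U in RHS]vsubmxK mulKVmx // subrK; congr col_mx.
  have -> : D *m z = Z *m z + C *m invmx A *m B *m z by rewrite -mulmxDl subrK.
  rewrite /z mulKVmx // !mulmxA mulmxBr !mulmxA.
  by rewrite addrACA addNr addr0 addrC subrK.
have uM : block_mx A B C D \in unitmx.
  by rewrite unitmxE det_block_ul // unitrM -!unitmxE uA.
rewrite -mulmxA.
have -> : invmx (block_mx A B C D) *m U = y by rewrite -My mulKmx.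
clearbody z; rewrite -{1}[V]hsubmxK mul_row_col mulmxBl !mulmxBr !mulmxA.
by rewrite addrAC addrA.
Qed.

End SchurComplement.

Section PsdMatrices.
Variable R : realFieldType.

Definition psdmx n (P : 'M[R]_n) := forall v : 'cV[R]_n, 0 <= (v^T *m P *m v) 0 0.

Lemma trmx11 (A : 'M[R]_1) : A^T = A.
Proof. by rewrite [A]mx11_scalar tr_scalar_mx. Qed.

Lemma psdmx11_ge0 (A : 'M[R]_1) : psdmx A -> 0 <= A 0 0.
Proof. by move=> /(_ 1%:M); rewrite trmx1 mul1mx mulmx1. Qed.

Lemma psdmx_scalar n (c : R) : 0 <= c -> psdmx (c%:M : 'M[R]_n).
Proof.
move=> c_ge0 v; rewrite mul_mx_scalar -scalemxAl mxE mulr_ge0 // mxE.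
by rewrite sumr_ge0 // => i _; rewrite mxE -expr2 sqr_ge0.
Qed.

Lemma quad_block_mx n1 n2 p (A : 'M[R]_n1) B C (D : 'M[R]_n2)
    (u : 'M[R]_(n1, p)) (w : 'M[R]_(n2, p)) :
  (col_mx u w)^T *m block_mx A B C D *m col_mx u w =
  u^T *m A *m u + u^T *m B *m w + (w^T *m C *m u + w^T *m D *m w).
Proof. by rewrite tr_col_mx mul_row_block mul_row_col !mulmxDl addrACA. Qed.

Lemma psdmx_ulsubmx n1 n2 (A : 'M[R]_n1) B C (D : 'M[R]_n2) :
  psdmx (block_mx A B C D) -> psdmx A.
Proof.
move=> psdM u; have := psdM (col_mx u 0).
by rewrite quad_block_mx trmx0 !mulmx0 !mul0mx !addr0.
Qed.

Lemma psdmx_drsubmx n1 n2 (A : 'M[R]_n1) B C (D : 'M[R]_n2) :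
  psdmx (block_mx A B C D) -> psdmx D.
Proof.
move=> psdM w; have := psdM (col_mx 0 w).
by rewrite quad_block_mx trmx0 !mulmx0 !mul0mx !add0r.
Qed.

Lemma trmx_schur n1 n2 (A : 'M[R]_n1) (B : 'M[R]_(n1, n2)) (D : 'M[R]_n2) :
  A^T = A -> D^T = D -> (D - B^T *m invmx A *m B)^T = D - B^T *m invmx A *m B.
Proof.
by move=> symA symD; rewrite raddfB /= symD !trmx_mul trmx_inv symA trmxK mulmxA.
Qed.

Lemma psdmx_schur n1 n2 (A : 'M[R]_n1) (B : 'M[R]_(n1, n2)) (D : 'M[R]_n2) E :
  psdmx (block_mx A B B^T D) -> psdmx E -> A + E \in unitmx -> (A + E)^T = A + E ->
  psdmx (D - B^T *m invmx (A + E) *m B).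
Proof.
move=> psdM psdE unitAE symAE v.
set Ai := invmx (A + E); set u := B *m v.
(* test the block form against [col_mx (- (A + E)^-1 B v) v] *)
set w := - (Ai *m u).
have wT : w^T = - (u^T *m Ai) by rewrite raddfN /= trmx_mul trmx_inv symAE.
have wAw : w^T *m A *m w = u^T *m Ai *m u - w^T *m E *m w.
  rewrite -[A](addrK E) mulmxBr mulmxBl; congr (_ - _).
  by rewrite wT /w mulNmx mulNmx mulmxN opprK -!mulmxA mulKVmx.
have wBv : w^T *m B *m v = - (u^T *m Ai *m u) by rewrite wT !mulNmx -!mulmxA.
have vBw : v^T *m B^T *m w = - (u^T *m Ai *m u).
  by rewrite -trmx_mul /w mulmxN mulmxA.
have vSv : v^T *m (B^T *m Ai *m B) *m v = u^T *m Ai *m u.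
  by rewrite /u trmx_mul !mulmxA.
have := psdM (col_mx w v); have := psdE w.
rewrite quad_block_mx wAw wBv vBw mulmxBr mulmxBl vSv !mxE.
lra.
Qed.

Lemma det_add_scalar_ge r (P : 'M[R]_r) (c : R) : 0 < c -> P^T = P -> psdmx P ->
  c ^+ r <= \det (P + c%:M).
Proof.
move=> c_gt0; elim: r P => [|r IHr]; first by move=> P; rewrite det_mx00 expr0.
rewrite -[r.+1]/(1 + r)%N => P symP psdP.
rewrite -[P]submxK in symP psdP *.
rewrite /= tr_block_mx in symP; case/eq_block_mx: symP => symA _ BT symD.
rewrite -BT in psdP *; rewrite (scalar_mx_block 1 r c) add_block_mx !(addr0, add0r).
set a := ulsubmx P in symA psdP *.
have a_ge0 := psdmx11_ge0 (psdmx_ulsubmx psdP).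
have unitA : a + c%:M \in unitmx.
  by rewrite unitmxE det_mx11 [_ 0 0]mxE [c%:M 0 0]mxE unitfE gt_eqF // ltr_wpDl.
rewrite det_block_ul // det_mx11 addrAC exprS [_ 0 0]mxE [c%:M 0 0]mxE eqxx mulr1n.
apply: ler_pM; rewrite ?exprn_ge0 ?lerDr ?(ltW c_gt0) //.
apply: IHr; first by rewrite trmx_schur ?trmx11.
by apply: psdmx_schur; rewrite ?trmx11 //; apply/psdmx_scalar/ltW.
Qed.

Lemma unitmx_add_scalar r (P : 'M[R]_r) (c : R) : 0 < c -> P^T = P -> psdmx P ->
  P + c%:M \in unitmx.
Proof.
move=> c_gt0 symP psdP; rewrite unitmxE unitfE gt_eqF //.
exact: lt_le_trans (exprn_gt0 _ c_gt0) (det_add_scalar_ge c_gt0 symP psdP).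
Qed.

Lemma det_add_scalar_mul_schur_ge m (S : 'M[R]_m) (s : 'cV[R]_m) (v c : R) :
  0 < v -> 0 < c -> S^T = S -> psdmx (block_mx v%:M s^T s S) ->
  c ^+ m * v <= \det (S + c%:M) * (v - (s^T *m invmx (S + c%:M) *m s) 0 0).
Proof.
move=> v_gt0 c_gt0 symS psdM.
have unitv : (v%:M : 'M[R]_1) \in unitmx by rewrite unitmxE det_scalar1 unitfE gt_eqF.
have unitS := unitmx_add_scalar c_gt0 symS (psdmx_drsubmx psdM).
have psd0 : psdmx (0 : 'M[R]_1) by move=> u; rewrite mulmx0 mul0mx mxE.
have psdT : psdmx (S - s *m invmx v%:M *m s^T).
  rewrite -[s in block_mx _ _ s _]trmxK in psdM.
  by have := psdmx_schur psdM psd0; rewrite addr0 trmxK; apply; rewrite ?tr_scalar_mx.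
have symT : (S - s *m invmx v%:M *m s^T)^T = S - s *m invmx v%:M *m s^T.
  by have := trmx_schur s^T (tr_scalar_mx _ v) symS; rewrite trmxK.
(* expand [\det (block_mx (S + c%:M) s s^T v%:M)] along either diagonal block *)
have -> : v - (s^T *m invmx (S + c%:M) *m s) 0 0 =
          \det (v%:M - s^T *m invmx (S + c%:M) *m s).
  rewrite det_mx11 [(_ + _ : 'M_1) 0 0]mxE [(- _ : 'M_1) 0 0]mxE.
  by rewrite [v%:M 0 0]mxE eqxx mulr1n.
rewrite -det_block_ul // det_block_dr // det_scalar1.
by rewrite mulrC addrAC; apply: ler_wpM2l; [exact: ltW | exact: det_add_scalar_ge].
Qed.

End PsdMatrices.

Lemma sqrt_div_le (R : rcfType) (u v e : R) :
  0 <= e -> u <= e ^+ 2 * v -> Num.sqrt u / Num.sqrt v <= e.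
Proof.
move=> e_ge0 le_u; have [v_le0 | v_gt0] := leP v 0.
  by rewrite (ler0_sqrtr v_le0) invr0 mulr0.
rewrite ler_pdivrMr ?sqrtr_gt0 // -[e in e * _]ger0_norm // -sqrtr_sqr -sqrtrM.
  by rewrite ler_wsqrtr.
exact: sqr_ge0.
Qed.

Lemma le_expR_sqr_of_ln (R : realType) (d C : R) :
  0 < d -> ln d / 2 <= C -> d <= expR C ^+ 2.
Proof. by move=> d_gt0 le_lnC; rewrite -(lnK d_gt0) expr2 -expRD ler_expR; lra. Qed.

Section Concatenation.
Variable X : finType.

Definition catf n1 n2 (p : 'I_n1 -> X) (q : 'I_n2 -> X) : 'I_(n1 + n2) -> X :=
  fun i => match split i with inl j => p j | inr j => q j end.

Lemma qprefix_add (xq : nat -> X) n m :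
  qprefix xq (n + m) = catf (qprefix xq n) (fun j : 'I_m => xq (n + j).+1).
Proof. by apply: funext => i; rewrite /catf /qprefix; case: splitP => j /= ->. Qed.

End Concatenation.

Section GaussianProcessPosterior.
Variables (R : realType) (X : finType) (k : X -> X -> R) (sigma : R).
Hypotheses (psd_k : psd_kernel k) (sigma_gt0 : 0 < sigma).

Local Notation c := (sigma ^+ 2).

Definition kmx n1 n2 (p : 'I_n1 -> X) (q : 'I_n2 -> X) : 'M[R]_(n1, n2) :=
  \matrix_(i, j) k (p i) (q j).

Definition noisy_gram n (p : 'I_n -> X) := gram k p + c%:M.

Definition pt (x : X) : 'I_1 -> X := fun=> x.

Definition post_covmx n (p : 'I_n -> X) n1 n2 (q : 'I_n1 -> X) (q' : 'I_n2 -> X) :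
  'M[R]_(n1, n2) := \matrix_(i, j) post_cov k sigma p (q i) (q' j).

Lemma sigma2_gt0 : 0 < c. Proof. exact: exprn_gt0. Qed.

Lemma trmx_kmx n1 n2 (p : 'I_n1 -> X) (q : 'I_n2 -> X) : (kmx p q)^T = kmx q p.
Proof. by case: psd_k => k_sym _; apply/matrixP => i j; rewrite !mxE k_sym. Qed.

Lemma kmx_catl n1 n2 m (p : 'I_n1 -> X) (q : 'I_n2 -> X) (r : 'I_m -> X) :
  kmx (catf p q) r = col_mx (kmx p r) (kmx q r).
Proof.
by apply/matrixP => i j; rewrite !mxE /catf; case: splitP => l _; rewrite mxE.
Qed.

Lemma kmx_catr n1 n2 m (p : 'I_n1 -> X) (q : 'I_n2 -> X) (r : 'I_m -> X) :
  kmx r (catf p q) = row_mx (kmx r p) (kmx r q).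
Proof. by rewrite -trmx_kmx kmx_catl tr_col_mx !trmx_kmx. Qed.

Lemma gram_psdmx n (p : 'I_n -> X) : psdmx (gram k p).
Proof. by case: psd_k => _ psd_gram v; apply: psd_gram. Qed.

Lemma trmx_noisy_gram n (p : 'I_n -> X) : (noisy_gram p)^T = noisy_gram p.
Proof. by rewrite raddfD /= tr_scalar_mx [(gram k p)^T]trmx_kmx. Qed.

Lemma noisy_gram_unit n (p : 'I_n -> X) : noisy_gram p \in unitmx.
Proof.
by apply: unitmx_add_scalar; [exact: sigma2_gt0 | exact: trmx_kmx | exact: gram_psdmx].
Qed.

Lemma noisy_gram_cat n1 n2 (p : 'I_n1 -> X) (q : 'I_n2 -> X) :
  noisy_gram (catf p q) = block_mx (noisy_gram p) (kmx p q) (kmx q p) (noisy_gram q).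
Proof.
rewrite /noisy_gram (scalar_mx_block n1 n2 c) -[gram k _]/(kmx _ _).
rewrite kmx_catl !kmx_catr -[col_mx _ _]/(block_mx _ _ _ _).
by rewrite add_block_mx !(addr0, add0r).
Qed.

Lemma post_covmxE n (p : 'I_n -> X) n1 n2 (q : 'I_n1 -> X) (q' : 'I_n2 -> X) :
  post_covmx p q q' = kmx q q' - kmx q p *m invmx (noisy_gram p) *m kmx p q'.
Proof.
apply/matrixP => i j; rewrite !mxE; congr (_ - _).
rewrite !mxE; apply: eq_bigr => l _; rewrite !mxE; congr (_ * _).
by apply: eq_bigr => l' _; rewrite !mxE.
Qed.

Lemma trmx_post_covmx n (p : 'I_n -> X) n1 n2 (q : 'I_n1 -> X) (q' : 'I_n2 -> X) :
  (post_covmx p q q')^T = post_covmx p q' q.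
Proof.
rewrite !post_covmxE raddfB /= !trmx_mul trmx_inv trmx_noisy_gram !trmx_kmx.
by rewrite mulmxA.
Qed.

Lemma post_covmx_psd n (p : 'I_n -> X) m (q : 'I_m -> X) : psdmx (post_covmx p q q).
Proof.
rewrite post_covmxE -[kmx q p]trmx_kmx; apply: psdmx_schur.
- have := gram_psdmx (catf p q).
  by rewrite -[gram k _]/(kmx _ _) kmx_catl !kmx_catr trmx_kmx; apply.
- exact/psdmx_scalar/ltW/sigma2_gt0.
- exact: noisy_gram_unit.
- exact: trmx_noisy_gram.
Qed.

Lemma post_covmx_cat n (p : 'I_n -> X) n1 n2 (q1 : 'I_n1 -> X) (q2 : 'I_n2 -> X) :
  post_covmx p (catf q1 q2) (catf q1 q2) =
  block_mx (post_covmx p q1 q1) (post_covmx p q1 q2)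
           (post_covmx p q2 q1) (post_covmx p q2 q2).
Proof.
rewrite -[LHS]submxK; congr block_mx; apply/matrixP => i j;
  by rewrite !mxE /catf ?(unsplitK (inl _)) ?(unsplitK (inr _)).
Qed.

Lemma post_covmx_pt n (p : 'I_n -> X) x y :
  post_covmx p (pt x) (pt y) = (post_cov k sigma p x y)%:M.
Proof. by rewrite [LHS]mx11_scalar mxE. Qed.

Lemma post_cov_ge0 n (p : 'I_n -> X) x : 0 <= post_cov k sigma p x x.
Proof. by have := psdmx11_ge0 (post_covmx_psd p (pt x)); rewrite mxE. Qed.

Lemma post_covmx_catf n m (p : 'I_n -> X) (a : 'I_m -> X)
    n1 n2 (q : 'I_n1 -> X) (q' : 'I_n2 -> X) :
  post_covmx (catf p a) q q' = post_covmx p q q' -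
    post_covmx p q a *m invmx (post_covmx p a a + c%:M) *m post_covmx p a q'.
Proof.
have ZE : noisy_gram a - kmx a p *m invmx (noisy_gram p) *m kmx p a =
          post_covmx p a a + c%:M by rewrite post_covmxE addrAC.
have unitZ : post_covmx p a a + c%:M \in unitmx.
  apply: unitmx_add_scalar; first exact: sigma2_gt0.
    exact: trmx_post_covmx.
  exact: post_covmx_psd.
rewrite [LHS]post_covmxE kmx_catl kmx_catr noisy_gram_cat.
rewrite mulmx_invmx_block ?noisy_gram_unit ?ZE //.
by rewrite row_mxKl row_mxKr col_mxKu col_mxKd opprD addrA -!post_covmxE.
Qed.

Lemma det_scaled_post_covmx n m (p : 'I_n -> X) (a : 'I_m -> X) :
  \det (1%:M + sigma ^- 2 *: post_covmx p a a) = c ^- m * \det (post_covmx p a a + c%:M).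
Proof.
have c_neq0 : c != 0 by rewrite gt_eqF ?sigma2_gt0.
by rewrite -[c ^- m]exprVn -detZ scalerDr scale_scalar_mx mulVf // addrC.
Qed.

Lemma det_scaled_post_covmx_gt0 n m (p : 'I_n -> X) (a : 'I_m -> X) :
  0 < \det (1%:M + sigma ^- 2 *: post_covmx p a a).
Proof.
rewrite det_scaled_post_covmx mulr_gt0 ?invr_gt0 ?exprn_gt0 ?sigma2_gt0 //.
apply: lt_le_trans (exprn_gt0 _ sigma2_gt0) (det_add_scalar_ge _ _ _).
- exact: sigma2_gt0.
- exact: trmx_post_covmx.
- exact: post_covmx_psd.
Qed.

Lemma post_cov_le_det_mul n m (p : 'I_n -> X) (a : 'I_m -> X) x :
  post_cov k sigma p x x <=
  \det (1%:M + sigma ^- 2 *: post_covmx p a a) * post_cov k sigma (catf p a) x x.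
Proof.
set v := post_cov k sigma p x x.
have [v_le0 | v_gt0] := leP v 0.
  apply: le_trans v_le0 (mulr_ge0 _ (post_cov_ge0 _ x)).
  exact/ltW/det_scaled_post_covmx_gt0.
set S := post_covmx p a a; set s := post_covmx p a (pt x).
have psdM : psdmx (block_mx v%:M s^T s S).
  have := post_covmx_psd p (catf (pt x) a).
  by rewrite post_covmx_cat post_covmx_pt trmx_post_covmx.
have vE : post_cov k sigma (catf p a) x x = v - (s^T *m invmx (S + c%:M) *m s) 0 0.
  have /matrixP/(_ 0 0) := post_covmx_catf p a (pt x) (pt x).
  rewrite !post_covmx_pt -/S -trmx_post_covmx -/s [(_ + _ : 'M_1) 0 0]mxE.
  rewrite [(- _ : 'M_1) 0 0]mxE [(_%:M : 'M_1) 0 0]mxE [(_%:M : 'M_1) 0 0]mxE.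
  by rewrite eqxx !mulr1n.
have := det_add_scalar_mul_schur_ge v_gt0 sigma2_gt0 (trmx_post_covmx p a a) psdM.
by rewrite det_scaled_post_covmx -vE -mulrA ler_pdivlMl ?exprn_gt0 ?sigma2_gt0.
Qed.

End GaussianProcessPosterior.

Theorem lemma5 (R : realType) (X : finType) (k : X -> X -> R)
  (hk : psd_kernel k) (sigma : R) (hsigma : 0 < sigma)
  (B : nat) (hB : (0 < B)%N) (xq : nat -> X) (fb : nat -> nat)
  (hfb1 : forall t, (1 <= t)%N -> (fb t <= t - 1)%N)
  (hfb2 : forall t, (1 <= t)%N -> (t - fb t <= B)%N)
  (C : R)
  (hC : forall t, (1 <= t)%N ->
          forall m, (m <= B - 1)%N -> forall a : 'I_m -> X,
            minfo k sigma a (qprefix xq (fb t)) <= C) :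
  forall t, (1 <= t)%N -> forall x : X,
    post_sd k sigma (qprefix xq (fb t)) x / post_sd k sigma (qprefix xq (t - 1)) x
      <= expR C.
Proof.
move=> t t_ge1 x.
have [m le_mB ->] : exists2 m, (m <= B - 1)%N & (t - 1 = fb t + m)%N.
  by exists (t - 1 - fb t)%N; have := hfb1 t t_ge1; have := hfb2 t t_ge1; lia.
rewrite qprefix_add; set a := fun j : 'I_m => _.
apply: sqrt_div_le; first exact: expR_ge0.
apply: le_trans (post_cov_le_det_mul hk hsigma _ a x) _.
apply: ler_wpM2r; first exact: post_cov_ge0.
apply: le_expR_sqr_of_ln (hC t t_ge1 m le_mB a).
exact: det_scaled_post_covmx_gt0.
Qed.
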